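(* Let $G_{\mathrm{maj}}$ be the $q$-grammar with master variables $S=\{x,y\}$, rule $x_j\mapsto q^jx_0y_0$, $y_j\mapsto q^jx_0y_0$ ($j\ge0$), and order LPO, and let $D$ be its $q$-derivative. Let $\phi$ be the evaluation with $\phi(x_j)=xq^j$ and $\phi(y_j)=yq^j$ for all $j\ge0$ (into $\mathbb{K}[q,x,y]$, $x,y$ commuting indeterminates). Then for all $n\ge1$, \[ \phi\big(D^n(x_0)\big)=A^{\mathrm{maj}}_n(q;x,y):=\sum_{\sigma\in\mathfrak{S}_n}q^{\operatorname{maj}(\sigma)}x^{\operatorname{asc}(\sigma)}y^{\operatorname{des}(\sigma)}. \]
   Context: Let $\mathbb{K}$ be a commutative ring with unity and characteristic zero, $q$ an indeterminate. For a set $S$ of master variables, $\mathbb{S}=\{s_i:s\in S,\ i\in\{0,1,2,\dots\}\}$ is a set of non-commuting variables, $F(\mathbb{S})$ the free group on $\mathbb{S}$ and $\mathbb{E}=\mathbb{K}[q][F(\mathbb{S})]$ its group algebra (finite $\mathbb{K}[q]$-combinations of reduced words in letters from $\mathbb{S}\cup\mathbb{S}^{-1}$). A rule $R$ assigns to each $s_i$ an element $R(s_i)\in\mathbb{E}$, extended by $R(s_i^{-1})=-s_i^{-1}R(s_i)s_{i+1}^{-1}$. The up-arrow $\uparrow$ is the linear map replacing each letter $s_i^{\pm1}$ of a word by $s_{i+1}^{\pm1}$. An order rewrites each word by permuting its letters (extended linearly); LPO stably reorders the letters of a word according to the position of their underlying variable in the sequence $x_0,x_1,x_2,\dots,y_0,y_1,y_2,\dots$.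 A $q$-grammar is a triple $(S,R,\rho)$; its $q$-derivative is the $\mathbb{K}[q]$-linear map $D$ with $D(w_1\cdots w_n)=\sum_{j=1}^n\rho\big(w_1\cdots w_{j-1}R(w_j)\uparrow(w_{j+1}\cdots w_n)\big)$ for letters $w_j\in\mathbb{S}\cup\mathbb{S}^{-1}$, and $D^k=D\circ D^{k-1}$, $D^0=\mathrm{id}$. An evaluation $\phi$ sends each $s_i$ to an element of a commutative ring containing $\mathbb{K}[q]$ and is extended to a $\mathbb{K}[q]$-linear ring morphism on $\mathbb{E}$ with $\phi(s_i^{-1})=\phi(s_i)^{-1}$. For $\sigma\in\mathfrak{S}_n$ with the convention $\sigma_0=\sigma_{n+1}=0$, an index $0\le i\le n$ is a descent if $\sigma_i>\sigma_{i+1}$ and an ascent otherwise; $\operatorname{des},\operatorname{asc}$ count them. $\operatorname{maj}(\sigma)=\sum_{1\le i\le n-1,\ \sigma_i>\sigma_{i+1}}i$ is the usual major index. *)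

From HB Require Import structures.
From mathcomp Require Import all_boot all_order all_algebra all_fingroup.
From mathcomp Require Import mpoly.
Set Implicit Arguments. Unset Strict Implicit. Unset Printing Implicit Defensive.
Import Order.TTheory GRing.Theory.
Local Open Scope ring_scope.

(* Master variables S = {x, y}: encoded by bool, false = x, true = y.
   A letter (v, i, b) is s_i (b = true) or s_i^{-1} (b = false), s = v. *)
Definition letter := (bool * nat * bool)%type.
Definition lvar (l : letter) : bool := l.1.1.
Definition lidx (l : letter) : nat := l.1.2.
Definition lpos (l : letter) : bool := l.2.
Definition inv_letter (l : letter) : letter := (lvar l, lidx l, ~~ lpos l).

Fixpoint reduce (w : seq letter) : seq letter :=
  match w with
  | [::] => [::]
  | l :: w' =>
      match reduce w' with
      | l' :: r' => if l' == inv_letter l then r' else l :: l' :: r'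
      | [::] => [:: l]
      end
  end.

Definition wmul (u v : seq letter) : seq letter := reduce (u ++ v).

(* An element of E is represented as a finite formal sum (a list) of terms
   c * w with c in K[q] = {poly K} and w a reduced word.  All maps below are
   defined termwise and K[q]-linearly, so they are well defined on E. *)
Section GroupAlgebra.
Variable K : comNzRingType.

Definition E := seq ({poly K} * seq letter).

Definition Eword (w : seq letter) : E := [:: (1, w)].
Definition Eopp (e : E) : E := [seq (- t.1, t.2) | t <- e].
Definition Emul (a b : E) : E :=
  [seq (s.1 * t.1, wmul s.2 t.2) | s <- a, t <- b].

Definition up_letter (l : letter) : letter := (lvar l, (lidx l).+1, lpos l).
Definition upE (e : E) : E := [seq (t.1, map up_letter t.2) | t <- e].

(* A rule assigns R(s_i) to each positive letter: rule v i = R(v_i);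
   it is extended by R(s_i^{-1}) = - s_i^{-1} R(s_i) s_{i+1}^{-1}. *)
Definition ruleL (rule : bool -> nat -> E) (l : letter) : E :=
  if lpos l then rule (lvar l) (lidx l)
  else Eopp (Emul (Emul (Eword [:: l]) (rule (lvar l) (lidx l)))
                  (Eword [:: inv_letter (up_letter l)])).

Definition orderE (ord : seq letter -> seq letter) (e : E) : E :=
  [seq (t.1, reduce (ord t.2)) | t <- e].

Definition Dword (rule : bool -> nat -> E) (ord : seq letter -> seq letter)
  (w : seq letter) : E :=
  flatten [seq orderE ord
             (Emul (Emul (Eword (take j w)) (ruleL rule (nth (false,0,true) w j)))
                   (upE (Eword (drop j.+1 w))))
          | j <- iota 0 (size w)].

Definition qderiv (rule : bool -> nat -> E) (ord : seq letter -> seq letter)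
  (e : E) : E :=
  flatten [seq [seq (t.1 * u.1, u.2) | u <- Dword rule ord t.2] | t <- e].

End GroupAlgebra.

(* LPO: stable sort by the position of the underlying variable in the
   sequence x_0, x_1, x_2, ..., y_0, y_1, y_2, ... *)
Definition lpo_le (l1 l2 : letter) : bool :=
  (~~ lvar l1 && lvar l2) || ((lvar l1 == lvar l2) && (lidx l1 <= lidx l2)%N).
Definition LPO (w : seq letter) : seq letter := sort lpo_le w.

Definition x0y0 : seq letter := [:: (false, 0%N, true); (true, 0%N, true)].
Definition rule_maj (K : comNzRingType) (v : bool) (j : nat) : E K :=
  [:: ('X^j, x0y0)].
Definition Dmaj (K : comNzRingType) : E K -> E K := qderiv (@rule_maj K) LPO.
Definition Ex0 (K : comNzRingType) : E K := Eword K [:: (false, 0%N, true)].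

Section Eval.
Variable K : comNzRingType.
Local Notation T := {mpoly K[3]}.
Definition qv : T := 'X_(@Ordinal 3 0 isT).
Definition xv : T := 'X_(@Ordinal 3 1 isT).
Definition yv : T := 'X_(@Ordinal 3 2 isT).

Definition coefq (c : {poly K}) : T := \sum_(i < size c) c`_i *: qv ^+ i.

(* phi(x_j) = x q^j, phi(y_j) = y q^j.  Inverse letters have no image in
   K[q,x,y] (x, y are not units); they never occur in the elements
   evaluated below, and are sent to 0. *)
Definition phi_letter (l : letter) : T :=
  if lpos l then (if lvar l then yv else xv) * qv ^+ lidx l else 0.

Definition phiE (e : E K) : T :=
  \sum_(t <- e) coefq t.1 * \prod_(l <- t.2) phi_letter l.

(* sigma_1 ... sigma_n with values in 1..n, padded sigma_0 = sigma_{n+1} = 0 *)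
Definition ext_perm (n : nat) (s : 'S_n) : seq nat :=
  0%N :: rcons [seq (s i).+1 | i <- enum 'I_n] 0%N.
Definition is_descent (n : nat) (s : 'S_n) (i : nat) : bool :=
  (nth 0%N (ext_perm s) i.+1 < nth 0%N (ext_perm s) i)%N.
Definition des (n : nat) (s : 'S_n) : nat :=
  \sum_(0 <= i < n.+1) is_descent s i.
Definition asc (n : nat) (s : 'S_n) : nat :=
  \sum_(0 <= i < n.+1) ~~ is_descent s i.
Definition maj (n : nat) (s : 'S_n) : nat :=
  \sum_(1 <= i < n) (if is_descent s i then i else 0%N).

Definition Amaj (n : nat) : T :=
  \sum_(s : 'S_n) qv ^+ maj s * xv ^+ asc s * yv ^+ des s.
End Eval.

From HB Require Import structures.
From mathcomp Require Import all_boot all_order all_algebra all_fingroup.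
From mathcomp Require Import mpoly.
From mathcomp Require Import ring zify.
Set Implicit Arguments. Unset Strict Implicit. Unset Printing Implicit Defensive.

(* Under [phi], differentiating the [j]-th letter of a word [w] of positive letters replaces
   it by [x_0 y_0] and shifts the letters to its right up by one, so the term evaluates to
   [phi w] times the other variable times [q ^ (size w - j - 1)].  LPO keeps the x-letters in
   front, so summing over [j] gives [phi (D^k w) = phi w * P_k(a, b)], where [a], [b] count the
   x- and y-letters and [P_k = dpoly k] obeys
   [P_(k+1)(a, b) = y q^b [a]_q P_k(a, b+1) + x [b]_q P_k(a+1, b)] with [[a]_q = qint a].
   Inserting [n+1] into slot [p] of [s] in [S_n] (a slot is a gap of the padded word
   [0 s_1 ... s_n 0]) replaces that slot by an ascent followed by a descent, so a descent slot
   raises [asc] and an ascent slot raises [des]; [maj] grows by the number of descents right of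
   the slot, plus [p] for an ascent slot, and these increments run through [0 .. des-1] and
   [des .. n].  Hence
   [sum_(S_(n+1)) q^maj x^asc y^des P_k(asc, des) = sum_(S_n) q^maj x^asc y^des P_(k+1)(asc, des)],
   and descending to [S_0] gives [A_n = x P_n(1, 0) = phi (D^n x_0)]. *)

(** * Descent words *)

Definition insert_at (T : Type) (p : nat) (a : T) (s : seq T) : seq T :=
  take p s ++ a :: drop p s.

Definition descents (t : seq nat) : seq bool :=
  pairmap (fun a b => b < a) 0 (rcons t 0).

Definition split_slot (p : nat) (d : seq bool) : seq bool :=
  take p d ++ false :: true :: drop p.+1 d.

Fixpoint majw (d : seq bool) : nat :=
  if d is _ :: d' then count id d' + majw d' else 0.

Lemma size_descents t : size (descents t) = (size t).+1.
Proof. by rewrite size_pairmap size_rcons. Qed.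

Lemma descents_insert_at t p m : p <= size t -> 0 < m -> all (fun v => v < m) t ->
  descents (insert_at p m t) = split_slot p (descents t).
Proof.
move=> le_pt m_gt0 t_lt_m.
have [c [u def_cu]] : exists c u, rcons (drop p t) 0 = c :: u.
  by case: (drop p t) => [|c u]; [exists 0, [::] | exists c, (rcons u 0)].
have size_tp : size (pairmap (fun a b => b < a) 0 (take p t)) = p.
  by rewrite size_pairmap size_takel.
have l_lt_m : last 0 (take p t) < m.
  by case/predU1P: (mem_last 0 (take p t)) => [-> // | /mem_take/(allP t_lt_m)].
have c_lt_m : c < m.
  have : c \in 0 :: drop p t by rewrite -mem_rcons def_cu mem_head.
  by case/predU1P => [-> // | /mem_drop/(allP t_lt_m)].
rewrite /descents /insert_at rcons_cat /= def_cu pairmap_cat /=.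
rewrite -[in RHS](cat_take_drop p t) rcons_cat def_cu pairmap_cat /= /split_slot.
rewrite take_size_cat // drop_cat size_tp [p.+1 < p]ltnNge leqnSn subSnn /= drop0.
by rewrite ltnNge (ltnW l_lt_m) c_lt_m.
Qed.

Lemma count_sum_nth (T : Type) (x0 : T) (a : pred T) (s : seq T) :
  count a s = \sum_(0 <= i < size s) a (nth x0 s i).
Proof.
by rewrite -{1}(mkseq_nth x0 s) count_map -sum1_count big_mkcond /index_iota subn0.
Qed.

Lemma majw_cat u v : majw (u ++ v) = majw u + majw v + size u * count id v.
Proof. by elim: u => [|b u IH] /=; rewrite ?IH ?count_cat; lia. Qed.

Lemma majwE d : majw d = \sum_(0 <= i < size d) (if nth false d i then i else 0).
Proof.
elim: d => [|b d IH]; first by rewrite big_geq.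
rewrite [size _]/= big_nat_recl // if_same add0n [LHS]/= IH addnC (count_sum_nth false).
rewrite -big_split /=.
by apply: eq_bigr => i _; case: (nth false d i); rewrite ?addn1.
Qed.

Section SplitSlot.
Variables (p : nat) (d : seq bool).
Hypothesis lt_pd : p < size d.
Let dE : d = take p d ++ nth false d p :: drop p.+1 d.
Proof. by rewrite -drop_nth ?cat_take_drop. Qed.

Lemma count_id_split_slot :
  count id (split_slot p d) = count id d + ~~ nth false d p.
Proof. by rewrite /split_slot [X in _ = count _ X + _]dE !count_cat; case: nth => /=; lia. Qed.

Lemma count_negb_split_slot :
  count negb (split_slot p d) = count negb d + nth false d p.
Proof. by rewrite /split_slot [X in _ = count _ X + _]dE !count_cat; case: nth => /=; lia. Qed.

Lemma majw_split_slot : majw (split_slot p d) =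
  majw d + (count id (drop p.+1 d)).+1 + (if nth false d p then 0 else p).
Proof.
rewrite /split_slot [X in _ = majw X + _ + _]dE !(majw_cat (take p d)).
by rewrite size_takel ?(ltnW lt_pd) //; case: nth => /=; rewrite !mulnDr; lia.
Qed.

End SplitSlot.

(** * Permutations as words *)

Definition perm_word n (s : 'S_n) : seq nat := [seq (s i).+1 | i <- enum 'I_n].

Lemma size_perm_word n (s : 'S_n) : size (perm_word s) = n.
Proof. by rewrite size_map size_enum_ord. Qed.

Lemma nth_perm_word n (s : 'S_n) (i : 'I_n) : nth 0 (perm_word s) i = (s i).+1.
Proof. by rewrite (nth_map i) ?size_enum_ord // nth_ord_enum. Qed.

Lemma perm_word_lt n (s : 'S_n) : all (fun v => v < n.+1) (perm_word s).
Proof. by rewrite all_map; apply/allP => i _ /=; rewrite ltnS. Qed.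

Lemma perm_word_lift n (s : 'S_n) (p : 'I_n.+1) :
  perm_word (lift_perm p ord_max s) = insert_at p n.+1 (perm_word s).
Proof.
have le_pn : p <= size (perm_word s) by rewrite size_perm_word -ltnS.
apply: (@eq_from_nth _ 0).
  by rewrite size_cat /= size_take size_drop !size_perm_word; case: ltnP; lia.
rewrite size_perm_word => i lt_in; rewrite -[i]/(val (Ordinal lt_in)) nth_perm_word.
rewrite /insert_at nth_cat size_takel //.
case: (unliftP p (Ordinal lt_in)) => [j|] ->; last by rewrite lift_perm_id ltnn subnn.
rewrite lift_perm_lift /= /bump leqNgt ltn_ord /= add0n.
case: (leqP p j) => [le_pj | lt_jp]; last by rewrite lt_jp nth_take ?nth_perm_word.
by rewrite add1n ltnNge ltnW //= subSn //= nth_drop subnKC // nth_perm_word.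
Qed.

Lemma is_descentE n (s : 'S_n) i : i < n.+1 ->
  is_descent s i = nth false (descents (perm_word s)) i.
Proof. by move=> lt_in; rewrite (nth_pairmap 0) // size_rcons size_perm_word. Qed.

Lemma des_descents n (s : 'S_n) : des s = count id (descents (perm_word s)).
Proof.
rewrite (count_sum_nth false) size_descents size_perm_word.
by apply: eq_big_nat => i /andP[_ lt_in]; rewrite is_descentE.
Qed.

Lemma asc_descents n (s : 'S_n) : asc s = count negb (descents (perm_word s)).
Proof.
rewrite (count_sum_nth false) size_descents size_perm_word.
by apply: eq_big_nat => i /andP[_ lt_in]; rewrite is_descentE.
Qed.

Lemma maj_descents n (s : 'S_n) : majw (descents (perm_word s)) = maj s + n.
Proof.
(* Slot [n] is always a descent since [s_n > 0]; it contributes the extra [n]. *)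
case: n s => [|n] s.
  by rewrite majwE size_descents size_perm_word big_nat1 if_same /maj big_geq.
rewrite majwE size_descents size_perm_word big_nat_recr //= big_ltn //= if_same add0n.
rewrite -is_descentE // /is_descent /ext_perm -/(perm_word s) /=.
rewrite !nth_rcons size_perm_word ltnn eqxx ltnSn -[n]/(val (@ord_max n)) nth_perm_word.
congr (_ + _); apply: eq_big_nat => i /andP[_ lt_in].
by rewrite is_descentE // ltnS ltnW.
Qed.

Lemma big_lift_perm (R : Type) (idx : R) (op : Monoid.com_law idx) n
    (F : 'S_n.+1 -> R) :
  \big[op/idx]_(u : 'S_n.+1) F u =
  \big[op/idx]_(p : 'I_n.+1) \big[op/idx]_(s : 'S_n) F (lift_perm p ord_max s).
Proof.
pose h (ps : 'I_n.+1 * 'S_n) := lift_perm ps.1 ord_max ps.2.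
have h_inj : injective h.
  move=> [p s] [p' s'] eq_h.
  have fst_h ps : ps.1 = (h ps)^-1%g ord_max.
    by case: ps => p0 s0; rewrite -(lift_perm_id p0 ord_max s0) permK.
  have eq_p : p = p' by rewrite [p](fst_h (p, s)) [p'](fst_h (p', s')) eq_h.
  congr (_, _) => //; apply/permP => k; subst p'.
  by have := congr1 (fun u : 'S_n.+1 => u (lift p k)) eq_h; rewrite /= !lift_perm_lift => /lift_inj.
have h_bij : bijective h.
  by apply: inj_card_bij => //; rewrite card_prod card_ord !card_Sn factS.
by rewrite (reindex h) ?pair_bigA //; apply: onW_bij.
Qed.

(** * q-counting of slots *)

Import GRing.Theory.
Local Open Scope ring_scope.

Section QCounting.
Variables (R : comPzRingType) (q x y : R).

Definition qint (a : nat) : R := \sum_(i < a) q ^+ i.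

Lemma qint0 : qint 0 = 0.
Proof. by rewrite /qint big_ord0. Qed.

Lemma qintS a : qint a.+1 = qint a + q ^+ a.
Proof. by rewrite /qint big_ord_recr. Qed.

Lemma qintSl a : qint a.+1 = 1 + q * qint a.
Proof. by rewrite /qint big_ord_recl mulr_sumr; under eq_bigr do rewrite exprS. Qed.

Fixpoint dpoly (k a b : nat) : R :=
  if k is k'.+1 then y * q ^+ b * qint a * dpoly k' a b.+1 + x * qint b * dpoly k' a.+1 b
  else 1.

Lemma sum_descent_slots d :
  \sum_(p < size d) (if nth false d p then q ^+ count id (drop p.+1 d) else 0) =
  qint (count id d).
Proof.
elim: d => [|b d IH]; first by rewrite big_ord0 qint0.
rewrite big_ord_recl /= drop0 IH; case: b => /=; last by rewrite add0r.
by rewrite add1n qintS addrC.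
Qed.

Lemma sum_ascent_slots d :
  \sum_(p < size d) (if nth false d p then 0 else q ^+ (p + count id (drop p.+1 d))) =
  q ^+ count id d * qint (count negb d).
Proof.
elim: d => [|b d IH]; first by rewrite big_ord0 qint0 mulr0.
rewrite big_ord_recl /= drop0.
under eq_bigr do rewrite /bump /= add1n addSn exprS
  -[X in if _ then X else _](mulr0 q) -(fun_if (GRing.mul q)).
rewrite -mulr_sumr IH; case: b => /=; first by rewrite add0r add1n exprS mulrA.
by rewrite add0n qintSl; ring.
Qed.

Lemma sum_sorted_slots (v : seq bool) (A B : R) : sorted implb v ->
  \sum_(0 <= j < size v) (if nth false v j then A else B) * q ^+ (size v - j.+1) =
  A * qint (count id v) + B * q ^+ count id v * qint (count negb v).
Proof.
elim: v => [|b v IH] sorted_bv; first by rewrite big_geq // !qint0; ring.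
rewrite [size _]/= big_nat_recl // subn1 /=.
under eq_big_nat => j _ do rewrite subSS.
rewrite IH ?(path_sorted sorted_bv) //; case: b sorted_bv => /= [sorted_v | _].
  have /allP v_true : all id v.
    by elim: v sorted_v {IH} => //= c v IHv /andP[]; case: c.
  have -> : count id v = size v by apply/eqP; rewrite -all_count; apply/allP.
  have -> : count negb v = 0%N.
    by rewrite (@eq_in_count _ _ pred0) ?count_pred0 // => c /v_true ->.
  by rewrite qint0 add1n qintS; ring.
by rewrite add1n add0n qintS -(count_predC id v) exprD; ring.
Qed.

Definition dweight (k n : nat) (d : seq bool) : R :=
  q ^+ (majw d - n) * x ^+ count negb d * y ^+ count id d *
  dpoly k (count negb d) (count id d).

Lemma dweight_split_slot k n d p : (p < size d)%N -> (n <= majw d)%N ->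
  let a := count negb d in let b := count id d in let c := count id (drop p.+1 d) in
  dweight k n.+1 (split_slot p d) = q ^+ (majw d - n) * x ^+ a * y ^+ b *
    ((if nth false d p then q ^+ c else 0) * (x * dpoly k a.+1 b) +
     (if nth false d p then 0 else q ^+ (p + c)) * (y * dpoly k a b.+1)).
Proof.
move=> lt_pd le_nd a b c.
rewrite /dweight count_id_split_slot // count_negb_split_slot // majw_split_slot //.
have -> : (majw d + c.+1 + (if nth false d p then 0 else p) - n.+1 =
           majw d - n + (if nth false d p then c else p + c))%N.
  by case: nth; lia.
by case: nth => /=; rewrite ?addn0 ?addn1 exprD !exprS; ring.
Qed.

Lemma sum_dweight_split_slot k n d : size d = n.+1 -> (n <= majw d)%N ->
  \sum_(p < n.+1) dweight k n.+1 (split_slot p d) = dweight k.+1 n d.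
Proof.
move=> size_d le_nd.
under eq_bigr => p _ do rewrite dweight_split_slot ?size_d //.
rewrite -size_d -mulr_sumr big_split -!mulr_suml sum_descent_slots sum_ascent_slots.
by rewrite /dweight /=; ring.
Qed.

Definition perm_sum (n k : nat) : R :=
  \sum_(s : 'S_n) q ^+ maj s * x ^+ asc s * y ^+ des s * dpoly k (asc s) (des s).

Lemma perm_sum_dweight n k :
  perm_sum n k = \sum_(s : 'S_n) dweight k n (descents (perm_word s)).
Proof.
apply: eq_bigr => s _.
by rewrite /dweight maj_descents addnK -asc_descents -des_descents.
Qed.

Lemma perm_sumS n k : perm_sum n.+1 k = perm_sum n k.+1.
Proof.
rewrite !perm_sum_dweight big_lift_perm exchange_big; apply: eq_bigr => s _.
rewrite -sum_dweight_split_slot ?size_descents ?size_perm_word ?maj_descents ?leq_addl //.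
apply: eq_bigr => p _.
by rewrite perm_word_lift descents_insert_at ?size_perm_word ?perm_word_lt // -ltnS.
Qed.

Lemma perm_sumE n k : perm_sum n k = x * dpoly (n + k) 1 0.
Proof.
elim: n k => [|n IH] k; last by rewrite perm_sumS IH addnS.
rewrite perm_sum_dweight (eq_bigr (fun=> x * dpoly k 1 0)) => [|s _].
  by rewrite sumr_const card_Sn mulr1n.
have -> : perm_word s = [::] by apply: size0nil; rewrite size_perm_word.
by rewrite /dweight /= expr0 expr1 !mul1r mulr1.
Qed.

End QCounting.

(** * The grammar [G_maj] under [phi] *)

Definition posw (w : seq letter) : bool := all lpos w.

Lemma reduce_posw w : posw w -> reduce w = w.
Proof.
elim: w => //= l w IH /andP[pos_l pos_w]; rewrite IH //.
case: w pos_w {IH} => //= l' w /andP[pos_l' _].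
by case: eqP => // eq_l'; move: pos_l'; rewrite eq_l' /lpos /= pos_l.
Qed.

Lemma posw_LPO w : posw (LPO w) = posw w.
Proof. by rewrite /posw (perm_all _ (permEl (perm_sort _ _))). Qed.

Lemma lpo_le_total : total lpo_le.
Proof.
move=> [[a i] ?] [[b j] ?]; rewrite /lpo_le /lvar /lidx /=.
by case: a; case: b; rewrite //= leq_total.
Qed.

Lemma sorted_LPO w : sorted implb (map lvar (LPO w)).
Proof.
apply: (homo_sorted (e := lpo_le)); last exact: sort_sorted lpo_le_total _.
by move=> [[[] ?] ?] [[[] ?] ?].
Qed.

Lemma count_LPO (a : pred letter) w : count a (LPO w) = count a w.
Proof. by apply/seq.permP; rewrite perm_sort. Qed.

Section Grammar.
Variable K : comNzRingType.
Local Notation T := {mpoly K[3]}.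
Local Notation q := (qv K).
Local Notation x := (xv K).
Local Notation y := (yv K).
Local Notation D := (@Dmaj K).

Lemma coefqE (c : {poly K}) : coefq c = horner_alg q c.
Proof.
rewrite /horner_alg /= /horner_morph /= (horner_coef_wide _ (size_poly _ _)).
by apply: eq_bigr => i _; rewrite coef_map /= mulr_algl.
Qed.

Lemma coefqM (c d : {poly K}) : coefq (c * d) = coefq c * coefq d.
Proof. by rewrite !coefqE rmorphM. Qed.

Lemma coefq1 : coefq (1 : {poly K}) = 1.
Proof. by rewrite coefqE rmorph1. Qed.

Lemma coefqXn j : coefq ('X^j : {poly K}) = q ^+ j.
Proof. by rewrite coefqE rmorphXn /= horner_algX. Qed.

Definition Escale (c : {poly K}) (e : E K) : E K := [seq (c * t.1, t.2) | t <- e].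

Lemma Dmaj_cat (e1 e2 : E K) : D (e1 ++ e2) = D e1 ++ D e2.
Proof. by rewrite /Dmaj /qderiv map_cat flatten_cat. Qed.

Lemma Dmaj_scale c (e : E K) : D (Escale c e) = Escale c (D e).
Proof.
rewrite /Dmaj /qderiv /Escale; elim: e => //= t e IH.
by rewrite map_cat IH -!map_comp; congr (_ ++ _); apply: eq_map => u /=; rewrite mulrA.
Qed.

Lemma iter_Dmaj_cat k (e1 e2 : E K) : iter k D (e1 ++ e2) = iter k D e1 ++ iter k D e2.
Proof. by elim: k => //= k ->; apply: Dmaj_cat. Qed.

Lemma iter_Dmaj_scale k c (e : E K) : iter k D (Escale c e) = Escale c (iter k D e).
Proof. by elim: k => //= k ->; apply: Dmaj_scale. Qed.

Lemma phiE_cat (e1 e2 : E K) : phiE (e1 ++ e2) = phiE e1 + phiE e2.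
Proof. by rewrite /phiE big_cat. Qed.

Lemma phiE_scale c (e : E K) : phiE (Escale c e) = coefq c * phiE e.
Proof.
rewrite /phiE big_map big_distrr; apply: eq_bigr => t _ /=.
by rewrite coefqM mulrA.
Qed.

Lemma phiE_iter_Dmaj k (e : E K) :
  phiE (iter k D e) = \sum_(t <- e) coefq t.1 * phiE (iter k D (Eword K t.2)).
Proof.
elim: e => [|[c w] e IH].
  by rewrite (_ : iter k D [::] = [::]) /phiE ?big_nil //; elim: k => //= k ->.
have -> : (c, w) :: e = Escale c (Eword K w) ++ e by rewrite /Escale /= mulr1.
by rewrite iter_Dmaj_cat phiE_cat iter_Dmaj_scale phiE_scale IH big_cons /= mulr1.
Qed.

Definition phiw (w : seq letter) : T := \prod_(l <- w) phi_letter K l.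

Lemma phiw_cat w1 w2 : phiw (w1 ++ w2) = phiw w1 * phiw w2.
Proof. by rewrite /phiw big_cat. Qed.

Lemma phiw_LPO w : phiw (LPO w) = phiw w.
Proof. by rewrite /phiw (perm_big _ (permEl (perm_sort _ _))). Qed.

Lemma phi_letter_up l : phi_letter K (up_letter l) = phi_letter K l * q.
Proof. by case: l => [[v i] []]; rewrite /phi_letter /= ?mul0r // exprSr mulrA. Qed.

Lemma phiw_up w : phiw (map up_letter w) = phiw w * q ^+ size w.
Proof.
rewrite /phiw big_map; elim: w => [|l w IH]; first by rewrite !big_nil mulr1.
by rewrite !big_cons IH phi_letter_up /= exprS; ring.
Qed.

Definition derive_at (w : seq letter) (j : nat) : seq letter :=
  LPO (take j w ++ x0y0 ++ map up_letter (drop j.+1 w)).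

Local Notation l0 := (false, 0%N, true).

Lemma posw_derive_at w j : posw w -> posw (derive_at w j).
Proof.
move=> pos_w; rewrite posw_LPO /posw !all_cat all_map /=.
by apply/andP; split; apply/allP => l; [move/mem_take | move/mem_drop]; apply: (allP pos_w).
Qed.

Lemma Dword_maj w : posw w ->
  Dword (@rule_maj K) LPO w =
  [seq ('X^(lidx (nth l0 w j)), derive_at w j) | j <- iota 0 (size w)].
Proof.
move=> pos_w; rewrite /Dword -[RHS]flatten_map1; congr flatten.
apply/eq_in_map => j; rewrite mem_iota add0n => /andP[_ lt_jw].
have pos_l : lpos (nth l0 w j) by apply: (all_nthP _ pos_w).
rewrite /ruleL pos_l /rule_maj /Emul /Eword /upE /orderE /= !mul1r mulr1.
have pos_dw := posw_derive_at j pos_w.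
have pos_s : posw (take j w ++ x0y0 ++ map up_letter (drop j.+1 w)) by rewrite -posw_LPO.
have pos_tx : posw (take j w ++ x0y0) by move: pos_s; rewrite catA /posw all_cat => /andP[].
by rewrite /wmul (reduce_posw pos_tx) -catA (reduce_posw pos_s) (reduce_posw pos_dw).
Qed.

Lemma Dmaj_Eword w : posw w ->
  D (Eword K w) = [seq ('X^(lidx (nth l0 w j)), derive_at w j) | j <- iota 0 (size w)].
Proof.
move=> pos_w; rewrite /Dmaj /qderiv /= cats0 Dword_maj // -map_comp.
by apply: eq_map => j /=; rewrite mul1r.
Qed.

Section DeriveAt.
Variables (w : seq letter) (j : nat).
Hypothesis lt_jw : (j < size w)%N.
Local Notation l := (nth l0 w j).
Let wE : w = take j w ++ l :: drop j.+1 w.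
Proof. by rewrite -drop_nth ?cat_take_drop. Qed.

Lemma count_derive_at (a : pred bool) :
  count a (map lvar (derive_at w j)) = (count a (map lvar w) + a (~~ lvar l))%N.
Proof.
have count_up s : count (preim lvar a) (map up_letter s) = count (preim lvar a) s.
  by rewrite count_map.
rewrite !count_map count_LPO [X in _ = (count _ X + _)%N]wE !count_cat count_up /=.
rewrite -[lvar l0]/false -[lvar (true, 0%N, true)]/true.
by case: (lvar l) => /=; case: (a true) (a false) => [] [] /=; lia.
Qed.

Lemma phiw_derive_at : posw w ->
  coefq ('X^(lidx l) : {poly K}) * phiw (derive_at w j) =
  phiw w * (if lvar l then x else y) * q ^+ (size w - j.+1).
Proof.
move=> pos_w; have pos_l : lpos l by apply: (all_nthP _ pos_w).
rewrite coefqXn phiw_LPO !phiw_cat phiw_up size_drop [X in _ = phiw X * _ * _]wE phiw_cat.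
rewrite /phiw !big_cons big_nil /phi_letter pos_l /= !expr0 !mulr1.
by case: (lvar l); ring.
Qed.

End DeriveAt.

Lemma phiE_iter_Dmaj_Eword k w : posw w -> sorted implb (map lvar w) ->
  phiE (iter k D (Eword K w)) =
  phiw w * dpoly q x y k (count negb (map lvar w)) (count id (map lvar w)).
Proof.
elim: k w => [|k IH] w pos_w sorted_w.
  by rewrite /phiE big_seq1 coefq1 mul1r mulr1.
set a := count negb _; set b := count id _.
rewrite iterSr phiE_iter_Dmaj Dmaj_Eword // big_map.
rewrite (eq_big_seq (fun j => phiw w * ((if nth false (map lvar w) j
    then x * dpoly q x y k a.+1 b else y * dpoly q x y k a b.+1) * q ^+ (size w - j.+1)))).
  rewrite -big_distrr /= -(size_map lvar w) -{1}(subn0 (size _)) sum_sorted_slots //.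
  by ring.
move=> j; rewrite mem_iota add0n => /andP[_ lt_jw] /=.
rewrite IH ?posw_derive_at ?sorted_LPO // !count_derive_at // mulrA phiw_derive_at //.
by rewrite (nth_map l0) // -/a -/b; case: (lvar _) => /=; rewrite ?addn0 ?addn1; ring.
Qed.

End Grammar.

Theorem theorem5p3 (K : comNzRingType) (hK : [pchar K]%R =i pred0) (n : nat) :
  (1 <= n)%N -> phiE (iter n (@Dmaj K) (Ex0 K)) = Amaj K n.
Proof.
move=> _; have -> : Amaj K n = perm_sum (qv K) (xv K) (yv K) n 0.
  by apply: eq_bigr => s _; rewrite mulr1.
rewrite perm_sumE addn0 phiE_iter_Dmaj_Eword //=.
by rewrite /phiw big_seq1 /phi_letter /= expr0 mulr1.
Qed.
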